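(* Let $V$ be a countable set, $\Omega_0$ a finite set, $\Omega=\Omega_0^V$, $q\in\mathbb N$, and let $\gamma=(\gamma_\Lambda)_{\Lambda\Subset V}$ be a quasilocal $q$-specification. Let $f:\Omega^q\to\mathbb R$ be continuous and $\Lambda\Subset V$. Then the map $$(\eta_1,\dots,\eta_q)\mapsto\gamma^{\otimes q}_\Lambda f(\eta_1,\dots,\eta_q):=\int_{\Omega^q}f(\sigma_1,\dots,\sigma_q)\prod_{i=1}^q\gamma_\Lambda(d\sigma_i\mid\eta_1,\dots,\eta_q)$$ is continuous on $\Omega^q$.
   Context: $\Omega$ carries the product $\sigma$-algebra $\mathcal F$ and the topology of pointwise (coordinatewise) convergence: $\sigma^{(n)}\to\sigma$ iff $\sigma^{(n)}(x)\to\sigma(x)$ for every $x\in V$; $\Omega^q$ carries the product topology, and $f:\Omega^q\to\mathbb R$ is continuous if $f(w^{(n)})\to f(w)$ whenever $w^{(n)}\to w$. For $\Delta\subset V$, $\mathcal F_\Delta$ is the $\sigma$-algebra generated by coordinates in $\Delta$, $\mathcal F^q_{\Lambda^c}=(\mathcal F_{\Lambda^c})^{\otimes q}$. A probability $q$-kernel is a map $\gamma_\Lambda:\mathcal F\times\Omega^q\to[0,1]$ with $\gamma_\Lambda(\cdot\mid\eta_1,\dots,\eta_q)$ a probability measure and $\gamma_\Lambda(A\mid\cdot)$ $\mathcal F^q_{\Lambda^c}$-measurable; proper means $\gamma_\Lambda(A\mid\eta_1,\dots,\eta_q)=\frac1q\sum_i\mathbf 1_A(\eta_i)$ for $A\in\mathcal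 F_{\Lambda^c}$. Composition: $(\gamma_\Delta\gamma_\Lambda)(A\mid\eta)=\int_{\Omega^q}\gamma_\Lambda(A\mid\zeta_1,\dots,\zeta_q)\prod_i\gamma_\Delta(d\zeta_i\mid\eta)$. A $q$-specification is a family of proper probability $q$-kernels $(\gamma_\Lambda)_{\Lambda\Subset V}$ with $\gamma_\Delta\gamma_\Lambda=\gamma_\Delta$ for $\Lambda\subset\Delta\Subset V$. It is quasilocal if for each $\Lambda\Subset V$ and every event $A\in\mathcal F_\Lambda$ the map $(\omega_1,\dots,\omega_q)\mapsto\gamma_\Lambda(A\mid\omega_1,\dots,\omega_q)$ is continuous on $\Omega^q$. *)

From HB Require Import structures.
From mathcomp Require Import all_boot all_order all_algebra.
From mathcomp Require Import all_classical all_reals all_analysis measurable_realfun.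
Unset Printing Implicit Defensive.
Import Order.TTheory GRing.Theory Num.Theory.
Import numFieldNormedType.Exports.
Local Open Scope classical_set_scope.
Local Open Scope ring_scope.

(* Configuration space Omega = S^V (S = Omega_0 finite, assumed inhabited
   by s0 so that it can carry MathComp-Analysis' measurable structure). *)
Definition config (V : Type) {S : Type} (s0 : S) := V -> S.

Section ConfigInstances.
Variables (V : Type) (S : Type) (s0 : S).
HB.instance Definition _ := gen_eqMixin (config V s0).
HB.instance Definition _ := gen_choiceMixin (config V s0).
HB.instance Definition _ := isPointed.Build (config V s0) (fun _ => s0).
End ConfigInstances.

Definition cyl_gen {V S : Type} (s0 : S) (Delta : set V) : set (set (config V s0)) :=
  [set A | exists x, Delta x /\ exists B : set S, A = (fun sigma : config V s0 => sigma x) @^-1` B].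

Definition F_ {V S : Type} (s0 : S) (Delta : set V) : set (set (config V s0)) :=
  <<s cyl_gen s0 Delta >>.

Definition Omega (V : Type) {S : Type} (s0 : S) := g_sigma_algebraType (cyl_gen s0 (@setT V)).

(* F^q_Delta = (F_Delta)^{\otimes q} on Omega^q = 'I_q -> Omega *)
Definition Fq_ {V S : Type} (s0 : S) (q : nat) (Delta : set V)
  : set (set ('I_q -> Omega V s0)) :=
  <<s [set E | exists (i : 'I_q) (A : set (config V s0)),
         F_ s0 Delta A /\ E = (fun w : 'I_q -> Omega V s0 => w i) @^-1` A] >>.

(* Pointwise convergence in Omega^q (Omega_0 discrete) *)
Definition convq {V S : Type} {s0 : S} {q : nat}
  (w : nat -> ('I_q -> Omega V s0)) (w0 : 'I_q -> Omega V s0) : Prop :=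
  forall (i : 'I_q) (x : V), exists N : nat, forall n, (N <= n)%N -> w n i x = w0 i x.

Definition contq {R : realType} {V S : Type} {s0 : S} {q : nat}
  (f : ('I_q -> Omega V s0) -> R) : Prop :=
  forall w w0, convq w w0 -> (fun n => f (w n)) @ \oo --> f w0.

Definition upd {V S : Type} {s0 : S} {q : nat} (zeta : 'I_q -> Omega V s0)
  (n : nat) (sigma : Omega V s0) : 'I_q -> Omega V s0 :=
  fun j => if val j == n then sigma else zeta j.

(* iint mu g n zeta = integral of g over the coordinates 0..n-1 w.r.t. mu
   (iterated), the remaining coordinates being taken from zeta. *)
Fixpoint iint {R : realType} {V S : Type} {s0 : S} {q : nat}
  (mu : {measure set (Omega V s0) -> \bar R})
  (g : ('I_q -> Omega V s0) -> \bar R) (n : nat) (zeta : 'I_q -> Omega V s0)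
  : \bar R :=
  match n with
  | 0 => g zeta
  | n'.+1 => (\int[mu]_sigma iint mu g n' (upd zeta n' sigma))%E
  end.

(* \int_{Omega^q} g d(mu^{\otimes q}) written out as an iterated integral *)
Definition prod_int {R : realType} {V S : Type} {s0 : S} {q : nat}
  (mu : {measure set (Omega V s0) -> \bar R})
  (g : ('I_q -> Omega V s0) -> \bar R) (eta : 'I_q -> Omega V s0) : \bar R :=
  iint mu g q eta.

Definition finite_subset {V : Type} (L : set V) := finite_set L.

Definition is_qkernel {R : realType} {V S : Type} {s0 : S} {q : nat} (L : set V)
  (g : ('I_q -> Omega V s0) -> probability (Omega V s0) R) : Prop :=
  forall A : set (Omega V s0), measurable A ->
    forall B : set (\bar R), measurable B ->
      Fq_ s0 q (~` L) ((fun eta => g eta A) @^-1` B).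

Definition is_proper {R : realType} {V S : Type} {s0 : S} {q : nat} (L : set V)
  (g : ('I_q -> Omega V s0) -> probability (Omega V s0) R) : Prop :=
  forall A : set (Omega V s0), F_ s0 (~` L) A -> forall eta,
    g eta A = ((q%:R)^-1 * \sum_(i < q) \1_A (eta i))%:E.

Definition kcomp {R : realType} {V S : Type} {s0 : S} {q : nat}
  (gD gL : ('I_q -> Omega V s0) -> probability (Omega V s0) R)
  (A : set (Omega V s0)) (eta : 'I_q -> Omega V s0) : \bar R :=
  prod_int (gD eta) (fun zeta => gL zeta A) eta.

Definition is_qspec {R : realType} {V S : Type} {s0 : S} {q : nat}
  (gamma : set V -> ('I_q -> Omega V s0) -> probability (Omega V s0) R) : Prop :=
  (forall L, finite_subset L -> is_qkernel L (gamma L) /\ is_proper L (gamma L)) /\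
  (forall L D, finite_subset L -> finite_subset D -> L `<=` D ->
     forall A : set (Omega V s0), measurable A ->
       forall eta, kcomp (gamma D) (gamma L) A eta = gamma D eta A).

Definition quasilocal {R : realType} {V S : Type} {s0 : S} {q : nat}
  (gamma : set V -> ('I_q -> Omega V s0) -> probability (Omega V s0) R) : Prop :=
  forall L, finite_subset L -> forall A : set (Omega V s0), F_ s0 L A ->
    contq (fun eta => fine (gamma L eta A)).

From Pilot Require Import Defs.
From HB Require Import structures.
From mathcomp Require Import all_boot all_order all_algebra.
From mathcomp Require Import all_classical all_reals all_analysis measurable_realfun.
Import Order.TTheory GRing.Theory Num.Theory.
Import numFieldNormedType.Exports.
Local Open Scope classical_set_scope.
Local Open Scope ring_scope.

(* Every gamma_L(. | eta) is carried by the finitely many configurations that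
   agree off L with one of the eta_i, so all integrals below are finite sums.
   Properness fixes the mass of each such off-L class, and consistency
   gamma_L gamma_L = gamma_L makes z |-> gamma_L(A | z) harmonic for the
   operator averaging over all ways of resampling the q coordinates of z among
   themselves.  A maximum principle then shows that gamma_L({p} | eta) is the
   mean over i of gamma_L({p} | eta_i, ..., eta_i).  Hence the iterated integral
   of f is a finite expression in the values of f and in the masses
   gamma_L({sigma = t on L} | xi, ..., xi), which are continuous in xi by
   quasilocality. *)

Section FiniteSupportIntegral.
Context d (T : measurableType d) (R : realType).
Variables (mu : {measure set T -> \bar R}) (s : seq T).
Hypotheses (s_uniq : uniq s) (measurable_set1 : forall p : T, measurable [set p]).
Hypothesis mu_supp : mu (~` [set` s]) = 0.
Local Open Scope ereal_scope.
Import HBNNSimple.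

Lemma measurable_sub_supp (A : set T) : A `<=` [set` s] -> measurable A.
Proof.
move=> As; have -> : A = \big[setU/set0]_(p <- s | `[< A p >]) [set p].
  apply/seteqP; split => [x Ax|x]; rewrite -bigcup_seq_cond.
    by exists x => //=; rewrite As //=; exact/asboolP.
  by case=> p /= /andP[_ /asboolP Ap] ->.
exact: bigsetU_measurable.
Qed.

Lemma ge0_integral_supp_measurable (h : T -> \bar R) :
  measurable_fun setT h -> (forall x, 0 <= h x) ->
  \int[mu]_x h x = \sum_(p <- s) h p * mu [set p].
Proof.
move=> mh h0; have ms : measurable [set` s] by exact: measurable_sub_supp.
rewrite -(setUv [set` s]) integral_setU //; last 3 first.
- exact: measurableC ms.
- by rewrite setUv.
- by rewrite disj_set2E setICr.
rewrite (@null_set_integral _ _ _ _ (~` _)) ?adde0 //; last 2 first.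
- exact: measurableC ms.
- exact: measurable_funS mh.
have -> : [set` s] = \big[setU/set0]_(p <- s) [set p].
  apply/seteqP; split => [x xs|x]; rewrite -bigcup_seq; first by exists x.
  by case=> p /= ps ->.
rewrite ge0_integral_bigsetU //; last 2 first.
- by move=> i j _ _ [x [-> ->]].
- exact: measurable_funS mh.
apply: eq_bigr => p _; rewrite (eq_integral (cst (h p))) ?integral_cst //.
by move=> x; rewrite inE /= => ->.
Qed.

Lemma ge0_integral_supp (f : T -> \bar R) : (forall x, 0 <= f x) ->
  \int[mu]_x f x = \sum_(p <- s) f p * mu [set p].
Proof.
move=> f0; apply/eqP; rewrite eq_le; apply/andP; split.
  rewrite ge0_integralTE //; apply: ge_ereal_sup => _ [h /= hf <-].
  rewrite -integralT_nnsfun ge0_integral_supp_measurable //; last 2 first.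
  - by apply: measurableT_comp => //; exact: measurable_funPT.
  - by move=> x; rewrite lee_fin; exact: fun_ge0.
  by apply: lee_sum => p _; apply: lee_wpmul2r.
pose g x := if x \in s then f x else 0.
have mg : measurable_fun setT g.
  move=> _ B mB; rewrite setTI.
  have -> : g @^-1` B = ([set` s] `&` g @^-1` B) `|` (~` [set` s] `&` g @^-1` B).
    by rewrite -setIUl setUv setTI.
  apply: measurableU; first by apply: measurable_sub_supp => x [].
  have [B0|B0] := pselect (B 0).
    rewrite (_ : _ `&` _ = ~` [set` s]); first exact/measurableC/measurable_sub_supp.
    by apply/seteqP; split=> [x []//|x xs]; split; rewrite //= /g ifN //; exact/negP.
  rewrite (_ : _ `&` _ = set0) //; apply/seteqP; split => // x [/negP xs].
  by rewrite /= /g ifN.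
have g0 x : 0 <= g x by rewrite /g; case: ifP.
have -> : \sum_(p <- s) f p * mu [set p] = \int[mu]_x g x.
  rewrite ge0_integral_supp_measurable // big_seq [RHS]big_seq.
  by apply: eq_bigr => p ps; rewrite /g ps.
rewrite !ge0_integralTE //; apply: ereal_sup_le => _ [h /= hg <-]; exists h => //= x.
by apply: (le_trans (hg x)); rewrite /g; case: ifP.
Qed.

Lemma integral_supp (h : T -> R) : (forall p, mu [set p] \is a fin_num) ->
  \int[mu]_x (h x)%:E = (\sum_(p <- s) h p * fine (mu [set p]))%R%:E.
Proof.
move=> mu_fin.
have ge0_supp (g : T -> R) : (forall x, 0 <= g x)%R ->
    \int[mu]_x (g x)%:E = (\sum_(p <- s) g p * fine (mu [set p]))%R%:E.
  move=> g0; rewrite ge0_integral_supp => [|x]; last by rewrite lee_fin.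
  by rewrite -sumEFin; apply: eq_bigr => p _; rewrite EFinM fineK.
rewrite integralE funerpos funerneg !ge0_supp; try exact: funrpos_ge0; try exact: funrneg_ge0.
rewrite -EFinB -sumrB; congr EFin; apply: eq_bigr => p _; rewrite -mulrBl.
by have /(congr1 (fun g => g p)) <- := funrposBneg h.
Qed.

End FiniteSupportIntegral.

Lemma g_sigma_invariant {T : Type} (G : set (set T)) (r : T -> T -> Prop) :
  (forall E, G E -> forall x y, r x y -> (E x <-> E y)) ->
  forall E, <<s G >> E -> forall x y, r x y -> (E x <-> E y).
Proof.
move=> rG; apply: smallest_sub => //; split.
- by move=> x y _; split.
- by move=> A rA x y /rA /= rxy; rewrite /setD /=; tauto.
- move=> A rA x y rxy; split=> -[k _ Akx]; exists k => //; exact/(rA k x y rxy).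
Qed.

Section Cylinders.
Context {V : countType} {S : Type} {s0 : S}.
Local Notation Om := (Omega V s0).

Definition agree_off (L : set V) (sigma sigma' : Om) := forall x, ~ L x -> sigma x = sigma' x.

Lemma agree_off_sym (L : set V) (sigma sigma' : Om) :
  agree_off L sigma sigma' -> agree_off L sigma' sigma.
Proof. by move=> agree x Lx; rewrite agree. Qed.

Lemma F_agree_off_invariant (L : set V) (E : set Om) : F_ s0 (~` L) E ->
  forall sigma sigma', agree_off L sigma sigma' -> (E sigma <-> E sigma').
Proof. by apply: g_sigma_invariant => _ [x [Lx [B ->]]] sigma sigma' /= ->. Qed.

Lemma Fq_agree_off_invariant (q : nat) (L : set V) (E : set ('I_q -> Om)) :
  Fq_ s0 q (~` L) E -> forall w w', (forall i, agree_off L (w i) (w' i)) -> (E w <-> E w').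
Proof.
apply: g_sigma_invariant => _ [i [A [FA ->]]] w w' ww'.
exact: F_agree_off_invariant FA _ _ (ww' i).
Qed.

Lemma F_measurable {D : set V} {A : set Om} : F_ s0 D A -> measurable A.
Proof.
move: A; apply: smallest_sub; first exact: smallest_sigma_algebra.
by move=> _ [x [_ [B ->]]]; apply: sub_sigma_algebra; exists x; split => //; exists B.
Qed.

Lemma F_cylinder (D P : set V) (p : Om) : P `<=` D ->
  F_ s0 D [set sigma : Om | forall x, P x -> sigma x = p x].
Proof.
pose FD := g_sigma_algebraType (cyl_gen s0 D).
move=> PD; rewrite (_ : [set sigma | _] = ~` \bigcup_x ~` [set sigma : Om | P x -> sigma x = p x]).
  apply: (@measurableC _ FD); apply: (@countable_bigcupT_measurable _ FD); first exact: countableP.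
  move=> x; apply: (@measurableC _ FD); have [Px|nPx] := pselect (P x).
    rewrite (_ : [set sigma | _] = (fun sigma : Om => sigma x) @^-1` [set p x]).
      by apply: sub_sigma_algebra; exists x; split; [exact: PD|exists [set p x]].
    by apply/seteqP; split => sigma /=; [apply|move=> ->].
  rewrite (_ : [set sigma | _] = setT); first exact: measurableT.
  by apply/seteqP; split => sigma // _ /nPx.
apply/seteqP; split => sigma; first by move=> Psigma [x _ /=]; apply; exact: Psigma.
by move=> /= nbig x Px; apply: contra_notP nbig => ne; exists x => //= /(_ Px).
Qed.

Lemma Omega_measurable_set1 (p : Om) : measurable [set p].
Proof.
rewrite (_ : [set p] = [set sigma : Om | forall x, setT x -> sigma x = p x]).
  by apply: (@F_measurable setT); apply: F_cylinder.
apply/seteqP; split => sigma /=; first by move=> ->.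
by move=> eqp; apply/funext => x; exact: eqp.
Qed.

Lemma F_agree_off (L : set V) (xi : Om) : F_ s0 (~` L) [set sigma | agree_off L sigma xi].
Proof. by apply: F_cylinder. Qed.

End Cylinders.

Section CoordinateAverages.
Context {T : Type} {R : realFieldType} {n : nat}.
Local Notation q := n.+1.
Local Notation config := ('I_q -> T).

Definition set_coord (z : config) (k : nat) (sigma : T) : config :=
  fun j => if val j == k then sigma else z j.

(* [avg_coords w H q z] is the mean of H over the q^q configurations obtained
   by overwriting every coordinate of z with some coordinate of w. *)
Fixpoint avg_coords (w : config) (H : config -> R) (k : nat) (z : config) : R :=
  if k is k'.+1 then q%:R^-1 * \sum_(i < q) avg_coords w H k' (set_coord z k' (w i))
  else H z.

Definition harmonic (H : config -> R) := forall z, H z = avg_coords z H q z.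

Lemma mean_cst (a : R) : q%:R^-1 * \sum_(i < q) a = a.
Proof. by rewrite sumr_const card_ord -[a *+ q]mulr_natl mulrA mulVf ?mul1r ?pnatr_eq0. Qed.

Lemma mean_le (a : 'I_q -> R) (M : R) : (forall i, a i <= M) -> q%:R^-1 * \sum_i a i <= M.
Proof.
move=> aM; rewrite ler_pdivrMl ?ltr0n // mulr_natl.
by rewrite -[X in M *+ X]card_ord -sumr_const ler_sum.
Qed.

Lemma mean_eq_max (a : 'I_q -> R) (M : R) :
  (forall i, a i <= M) -> q%:R^-1 * \sum_i a i = M -> forall i, a i = M.
Proof.
move=> aM avgM.
have /psumr_eq0P gap0 : \sum_i (M - a i) = 0.
  rewrite sumrB sumr_const card_ord -mulr_natl -avgM mulrA mulfV ?pnatr_eq0 //.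
  by rewrite mul1r subrr.
by move=> i; apply/eqP; rewrite eq_sym -subr_eq0 gap0 // => j _; rewrite subr_ge0.
Qed.

Lemma avg_coords_lin (w : config) (H1 H2 : config -> R) (a b : R) k z :
  avg_coords w (fun z => a * H1 z + b * H2 z) k z =
  a * avg_coords w H1 k z + b * avg_coords w H2 k z.
Proof.
elim: k z => [|k IH] z //=.
under eq_bigr do rewrite IH.
by rewrite big_split /= -!mulr_sumr mulrDr; congr (_ + _); exact: mulrCA.
Qed.

Lemma harmonic_lin (H1 H2 : config -> R) (a b : R) :
  harmonic H1 -> harmonic H2 -> harmonic (fun z => a * H1 z + b * H2 z).
Proof. by move=> h1 h2 z; rewrite avg_coords_lin -h1 -h2. Qed.

Lemma avg_coords_compat (r : T -> T -> Prop) (w : config) (H : config -> R) :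
  (forall x, r x x) -> (forall z z', (forall j, r (z j) (z' j)) -> H z = H z') ->
  forall k z z', (forall j, r (z j) (z' j)) -> avg_coords w H k z = avg_coords w H k z'.
Proof.
move=> rr rH; elim=> [|k IH] z z' zz' /=; first exact: rH.
congr (_ * _); apply: eq_bigr => i _; apply: IH => j.
by rewrite /set_coord; case: ifP.
Qed.

Lemma avg_coords_max (A : set T) (v : config) (H : config -> R) (M : R) :
  range v `<=` A -> (forall z, range z `<=` A -> H z <= M) ->
  forall k z, range z `<=` A ->
    avg_coords v H k z <= M /\
    (avg_coords v H k z = M -> H (fun j => if (j < k)%N then v ord0 else z j) = M).
Proof.
move=> vA HM; elim=> [|k IH] z zA /=.
  by split; [exact: HM | move=> <-; congr H; apply/funext].
have setA i : range (set_coord z k (v i)) `<=` A.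
  by move=> _ [j _ <-]; rewrite /set_coord; case: ifP => _; [apply: vA | apply: zA].
have avg_le i := (IH _ (setA i)).1.
split; first exact: mean_le.
move=> /(mean_eq_max _ _ avg_le)/(_ ord0)/((IH _ (setA ord0)).2) <-; congr H.
by apply/funext => j; rewrite /set_coord ltnS leq_eqVlt; case: ltngtP => // ->.
Qed.

Lemma harmonic_le0 (eta : config) (H : config -> R) :
  harmonic H -> (forall u, H (cst u) = 0) -> H eta <= 0.
Proof.
move=> harmH H0.
have [k _ kmax] := @arg_maxP _ R _ [ffun j => j] xpredT (fun k => H (eta \o k)) isT.
set v := eta \o _ in kmax.
have rangeE z : range z `<=` range eta -> exists k' : {ffun 'I_q -> 'I_q}, z = eta \o k'.
  move=> zeta; have /choice[k' k'E] : forall j, exists i, eta i = z j.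
    by move=> j; have [i _ <-] := zeta (z j) (imageT _ _); exists i.
  by exists [ffun j => k' j]; apply/funext => j; rewrite /= ffunE.
have Hv z : range z `<=` range eta -> H z <= H v.
  by move=> /rangeE[k' ->]; exact: kmax.
have range_v : range v `<=` range eta by move=> _ [j _ <-]; exact: imageT.
have [_ /(_ (esym (harmH v)))] := avg_coords_max _ _ _ _ range_v Hv q _ range_v.
rewrite (_ : (fun j => _) = cst (v ord0)); last by apply/funext => j; rewrite ltn_ord.
by rewrite H0 => v0; rewrite v0 Hv.
Qed.

Lemma harmonic_eq0 (eta : config) (H : config -> R) :
  harmonic H -> (forall u, H (cst u) = 0) -> H eta = 0.
Proof.
move=> harmH H0; apply/le_anti; rewrite harmonic_le0 //=.
have := @harmonic_le0 eta _ (harmonic_lin _ _ (-1) 0 harmH harmH).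
by rewrite mulN1r mul0r addr0 oppr_le0; apply => u; rewrite H0 !mulr0 addr0.
Qed.

End CoordinateAverages.

Section SpecificationKernel.
Context {R : realType} {V : countType} {S : finType} {s0 : S} {n : nat}.
Local Notation q := n.+1.
Local Notation Om := (Omega V s0).
Context {gamma : set V -> ('I_q -> Om) -> probability Om R}.
Hypothesis gamma_spec : is_qspec gamma.
Variable l : seq V.
Local Notation L := [set` l].
Local Notation mu eta := (gamma L eta).
Local Notation restriction := {ffun seq_sub l -> S}.
Local Notation class xi := [set sigma | agree_off L sigma xi].

Let L_finite : finite_subset L := finite_seq l.

Definition glue (t : restriction) (xi : Om) : Om :=
  fun x => if (insub x : option (seq_sub l)) is Some y then t y else xi x.

Lemma glue_agree_off (t : restriction) (xi : Om) : agree_off L (glue t xi) xi.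
Proof. by move=> x /negP Lx; rewrite /glue insubN. Qed.

Lemma glue_on_L (t : restriction) (xi xi' : Om) x : L x -> glue t xi x = glue t xi' x.
Proof. by move=> Lx; rewrite /glue insubT. Qed.

Lemma glue_restrict (sigma xi : Om) :
  agree_off L sigma xi -> sigma = glue [ffun y => sigma (val y)] xi.
Proof.
move=> sigma_xi; apply/funext => x; rewrite /glue; case: insubP => [y _ <-|/negP Lx].
  by rewrite ffunE.
exact: sigma_xi.
Qed.

Lemma glue_inj (xi : Om) : injective (glue ^~ xi).
Proof.
move=> t t' tt'; apply/ffunP => y.
by have := congr1 (fun sigma => sigma (val y)) tt'; rewrite /glue valK.
Qed.

Lemma class_eq (xi xi' : Om) : agree_off L xi xi' -> class xi = class xi'.
Proof.
move=> xi_xi'; apply/seteqP; split => sigma /= sigma_xi x Lx; rewrite sigma_xi //.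
  exact: xi_xi'.
by rewrite xi_xi'.
Qed.

Lemma indic_class_sym (xi sigma : Om) : \1_(class xi) sigma = \1_(class sigma) xi :> R.
Proof.
rewrite !indicE; have [agree|nagree] := pselect (agree_off L sigma xi).
  by rewrite !mem_set //; exact: agree_off_sym.
by rewrite !memNset // => /agree_off_sym.
Qed.

Lemma indic_classP (xi sigma : Om) :
  \1_(class xi) sigma = 1 :> R /\ agree_off L sigma xi \/
  \1_(class xi) sigma = 0 :> R /\ ~ agree_off L sigma xi.
Proof.
rewrite indicE; have [sigma_xi|nsigma_xi] := pselect (agree_off L sigma xi).
  by left; rewrite mem_set.
by right; rewrite memNset.
Qed.

Lemma kernel_agree_off (w w' : 'I_q -> Om) (A : set Om) : measurable A ->
  (forall i, agree_off L (w i) (w' i)) -> mu w A = mu w' A.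
Proof.
move=> mA ww'.
have Fpre := (gamma_spec.1 L L_finite).1 A mA [set mu w A] (emeasurable_set1 _).
by have [/(_ erefl) -> _] := Fq_agree_off_invariant _ _ _ Fpre w w' ww'.
Qed.

Lemma kernel_proper (A : set Om) (eta : 'I_q -> Om) : F_ s0 (~` L) A ->
  mu eta A = (q%:R^-1 * \sum_(i < q) \1_A (eta i))%:E.
Proof. by move=> FA; apply: (gamma_spec.1 L L_finite).2. Qed.

Lemma kernel_null (B : set Om) (eta : 'I_q -> Om) : F_ s0 (~` L) B ->
  (forall i, B (eta i)) -> mu eta (~` B) = 0%E.
Proof.
move=> FB etaB; rewrite probability_setC; last exact: F_measurable FB.
rewrite kernel_proper // (eq_bigr (fun=> 1)) => [|i _]; last by rewrite indicE mem_set.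
by rewrite mean_cst subee.
Qed.

Definition supp (eta : 'I_q -> Om) : seq Om :=
  undup [seq glue t (eta i) | i <- enum 'I_q, t <- enum restriction].

Lemma mem_supp (eta : 'I_q -> Om) (p : Om) :
  p \in supp eta <-> exists i, agree_off L p (eta i).
Proof.
rewrite mem_undup; split => [/allpairsP[[i t] /= [_ _ ->]]|[i p_eta]].
  by exists i; exact: glue_agree_off.
apply/allpairsP; exists (i, [ffun y => p (val y)]).
by rewrite /= !mem_enum; split => //; exact: glue_restrict.
Qed.

Lemma kernel_supp_null (eta w : 'I_q -> Om) :
  (forall j, exists i, agree_off L (w j) (eta i)) -> mu w (~` [set` supp eta]) = 0%E.
Proof.
move=> w_eta; rewrite (_ : [set` supp eta] = \big[setU/set0]_(i <- enum 'I_q) class (eta i)).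
  apply: kernel_null => [|j].
    by apply: (@bigsetU_measurable _ (g_sigma_algebraType (cyl_gen s0 (~` L)))) => i _;
      exact: F_agree_off.
  by rewrite -bigcup_seq; have [i wi] := w_eta j; exists i; rewrite /= ?mem_enum.
apply/seteqP; split => p; rewrite -bigcup_seq /=.
  by move=> /mem_supp[i p_eta]; exists i => //=; rewrite mem_enum.
by case=> i _ p_eta; apply/mem_supp; exists i.
Qed.

Lemma kernel_integral_supp (eta w : 'I_q -> Om) (h : Om -> R) :
  (forall j, exists i, agree_off L (w j) (eta i)) ->
  (\int[mu w]_x (h x)%:E = (\sum_(p <- supp eta) h p * fine (mu w [set p]))%:E)%E.
Proof.
move=> w_eta; apply: integral_supp.
- exact: undup_uniq.
- exact: Omega_measurable_set1.
- exact: kernel_supp_null.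
- by move=> p; apply: fin_num_measure; exact: Omega_measurable_set1.
Qed.

Lemma kernel_class_mass (eta : 'I_q -> Om) (xi : Om) :
  \sum_(p <- supp eta) \1_(class xi) p * fine (mu eta [set p]) =
  q%:R^-1 * \sum_(j < q) \1_(class xi) (eta j).
Proof.
apply: EFin_inj; rewrite -kernel_integral_supp => [|j]; last by exists j.
have mclass : measurable (class xi) := F_measurable (F_agree_off L xi).
by rewrite integral_indic // setIT; apply: kernel_proper; exact: F_agree_off.
Qed.

Lemma kernel_integral_invariant (eta : 'I_q -> Om) (phi : Om -> R) :
  (forall sigma sigma', agree_off L sigma sigma' -> phi sigma = phi sigma') ->
  (\int[mu eta]_x (phi x)%:E = (q%:R^-1 * \sum_(i < q) phi (eta i))%:E)%E.
Proof.
move=> phiE; rewrite (kernel_integral_supp eta) => [|j]; last by exists j.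
congr EFin.
(* c p counts the eta_j in the class of p; on supp eta, phi p is the average of
   the phi (eta_j) over those j, since phi is constant on classes. *)
pose c p := \sum_(j < q) \1_(class p) (eta j) : R.
have c_eq p p' : agree_off L p p' -> c p = c p' by move=> /class_eq; rewrite /c => ->.
have c_neq0 p : p \in supp eta -> c p != 0.
  move=> /mem_supp[i p_eta]; apply: lt0r_neq0.
  rewrite /c (bigD1 i) //= indic_class_sym indicE mem_set // ltr_pwDl ?ltr01 //.
  by rewrite sumr_ge0 // => j _; rewrite indicE ler0n.
have phi_avg p : p \in supp eta ->
    phi p = (\sum_(i < q) \1_(class p) (eta i) * phi (eta i)) / c p.
  move=> p_supp; rewrite (eq_bigr (fun i => \1_(class p) (eta i) * phi p)) => [|i _].
    by rewrite -mulr_suml mulrAC mulfV ?mul1r // c_neq0.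
  by have [[-> /phiE ->]|[-> _]] := indic_classP p (eta i); rewrite ?mul0r.
rewrite (eq_big_seq (fun p => \sum_(i < q)
    \1_(class p) (eta i) * phi (eta i) / c p * fine (mu eta [set p]))); last first.
  by move=> p /phi_avg ->; rewrite !mulr_suml.
rewrite exchange_big /= mulr_sumr; apply: eq_bigr => i _.
rewrite (eq_bigr (fun p => phi (eta i) / c (eta i) *
    (\1_(class (eta i)) p * fine (mu eta [set p])))) => [|p _].
  rewrite -mulr_sumr kernel_class_mass -/(c _) mulrCA divfK // c_neq0 //.
  by apply/mem_supp; exists i.
rewrite indic_class_sym; have [[-> /c_eq ->]|[-> _]] := indic_classP (eta i) p.
  by rewrite !mul1r.
by rewrite !(mul0r, mulr0).
Qed.

Lemma iint_avg_coords (w : 'I_q -> Om) (G : ('I_q -> Om) -> \bar R) :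
  (forall z, G z \is a fin_num) ->
  (forall z z', (forall j, agree_off L (z j) (z' j)) -> G z = G z') ->
  forall k z, iint (mu w) G k z = (avg_coords w (fine \o G) k z)%:E.
Proof.
move=> Gfin G_agree; elim=> [|k IH] z /=; first by rewrite fineK.
under eq_integral do rewrite IH.
apply: kernel_integral_invariant => sigma sigma' agree.
apply: (avg_coords_compat (agree_off L)) => [x y _ //|z1 z2 z12|j].
  by rewrite /= (G_agree _ _ z12).
by rewrite /upd /set_coord; case: ifP.
Qed.

Lemma kernel_harmonic (A : set Om) : measurable A -> harmonic (fun z => fine (mu z A)).
Proof.
move=> mA z; have := gamma_spec.2 L L L_finite L_finite (@subset_refl _ L) A mA z.
rewrite /Defs.kcomp /prod_int iint_avg_coords => [<- //|z'|z1 z2 z12].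
  exact: fin_num_measure.
exact: kernel_agree_off.
Qed.

Lemma kernel_cst_set1 (u p : Om) :
  fine (mu (cst u) [set p]) = fine (mu (cst p) [set p]) * \1_(class p) u.
Proof.
have [[-> up]|[-> nup]] := indic_classP p u.
  by rewrite mulr1 (kernel_agree_off (cst u) (cst p) _ (Omega_measurable_set1 p)).
rewrite mulr0 (_ : mu (cst u) [set p] = 0%E) //; apply/le_anti.
rewrite measure_ge0 andbT.
have mclass : measurable (class p) := F_measurable (F_agree_off L p).
apply: (@le_trans _ _ (mu (cst u) (class p))).
  by apply: le_measure; rewrite ?inE //; [exact: Omega_measurable_set1|move=> _ ->].
rewrite kernel_proper; last exact: F_agree_off.
by rewrite big1 ?mulr0 // => i _; rewrite indicE memNset.
Qed.

Lemma kernel_set1_mixture (eta : 'I_q -> Om) (p : Om) :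
  fine (mu eta [set p]) = q%:R^-1 * \sum_(i < q) fine (mu (cst (eta i)) [set p]).
Proof.
pose X z := fine (mu z [set p]); pose Z z := fine (mu z (class p)).
have ZE z : Z z = q%:R^-1 * \sum_(i < q) \1_(class p) (z i).
  by rewrite /Z kernel_proper //; exact: F_agree_off.
have harmD : harmonic (fun z => 1 * X z + - X (cst p) * Z z).
  apply: harmonic_lin; apply: kernel_harmonic; first exact: Omega_measurable_set1.
  exact: F_measurable (F_agree_off L p).
have D0 u : 1 * X (cst u) + - X (cst p) * Z (cst u) = 0.
  by rewrite ZE /= mean_cst /X kernel_cst_set1 mul1r mulNr subrr.
have /eqP := harmonic_eq0 eta _ harmD D0.
rewrite mul1r mulNr subr_eq0 -/(X eta) => /eqP ->.
rewrite ZE mulrCA mulr_sumr; congr (_ * _); apply: eq_bigr => i _.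
by rewrite [RHS]kernel_cst_set1.
Qed.

Definition cylinder (t : restriction) : set Om :=
  [set sigma | forall x, L x -> sigma x = glue t (fun=> s0) x].

Lemma cylinder_class (t : restriction) (xi : Om) :
  cylinder t `&` class xi = [set glue t xi].
Proof.
apply/seteqP; split => [sigma [sigma_t sigma_xi]|_ ->].
  rewrite /= (glue_restrict _ _ sigma_xi); congr glue; apply/ffunP => y.
  rewrite ffunE sigma_t; last exact: valP y.
  by rewrite /glue (valK y).
by split; [move=> x Lx; exact: glue_on_L | exact: glue_agree_off].
Qed.

Lemma kernel_cst_cylinder (t : restriction) (xi : Om) :
  mu (cst xi) [set glue t xi] = mu (cst xi) (cylinder t).
Proof.
have mcyl : measurable (cylinder t) by apply: (@F_measurable _ _ _ L); apply: F_cylinder.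
have mclass : measurable (class xi) := F_measurable (F_agree_off L xi).
rewrite [RHS](measureDI _ mcyl mclass) cylinder_class.
have null : mu (cst xi) (~` class xi) = 0%E.
  by apply: kernel_null => //; exact: F_agree_off.
rewrite [X in (X + _)%E](_ : _ = 0%E) ?add0e //; apply/le_anti.
rewrite measure_ge0 andbT -null; apply: le_measure; rewrite ?inE.
- exact: measurableD.
- exact: measurableC.
- by move=> x [].
Qed.

Definition cylinder_mass (t : restriction) (xi : Om) : R := fine (mu (cst xi) (cylinder t)).

Lemma kernel_cst_integral (xi : Om) (h : Om -> R) :
  (\int[mu (cst xi)]_x (h x)%:E =
   (\sum_(t : restriction) cylinder_mass t xi * h (glue t xi))%:E)%E.
Proof.
rewrite (@integral_supp _ _ _ _ [seq glue t xi | t <- enum restriction]).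
- rewrite big_map big_enum /=; congr EFin; apply: eq_bigr => t _.
  by rewrite kernel_cst_cylinder mulrC.
- by rewrite map_inj_uniq ?enum_uniq //; exact: glue_inj.
- exact: Omega_measurable_set1.
- rewrite (_ : [set` _] = class xi); first by apply: kernel_null => //; exact: F_agree_off.
  apply/seteqP; split => sigma /=; first by move=> /mapP[t _ ->]; exact: glue_agree_off.
  by move=> /glue_restrict ->; apply: map_f; rewrite mem_enum.
- by move=> p; apply: fin_num_measure; exact: Omega_measurable_set1.
Qed.

Lemma kernel_integral (eta : 'I_q -> Om) (h : Om -> R) :
  (\int[mu eta]_x (h x)%:E = (q%:R^-1 * \sum_(i < q) \sum_(t : restriction)
     cylinder_mass t (eta i) * h (glue t (eta i)))%:E)%E.
Proof.
rewrite (kernel_integral_supp eta) => [|j]; last by exists j.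
congr EFin; under eq_bigr do rewrite kernel_set1_mixture mulrCA mulr_sumr.
rewrite -mulr_sumr exchange_big /=; congr (_ * _); apply: eq_bigr => i _.
apply: EFin_inj; rewrite -kernel_cst_integral (kernel_integral_supp eta) // => j.
by exists i.
Qed.

Hypothesis gamma_quasilocal : quasilocal gamma.
Variable f : ('I_q -> Om) -> R.
Hypothesis f_cont : contq f.

Lemma cylinder_mass_cvg (t : restriction) (xis : nat -> Om) (xi : Om) :
  (forall x, exists N, forall m, (N <= m)%N -> xis m x = xi x) ->
  cylinder_mass t (xis m) @[m --> \oo] --> cylinder_mass t xi.
Proof.
move=> xis_xi.
apply: (gamma_quasilocal L L_finite (cylinder t) _ (fun m => cst (xis m)) (cst xi)).
  by apply: F_cylinder.
by move=> i x; exact: xis_xi.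
Qed.

Fixpoint iint_expand (eta : 'I_q -> Om) (k : nat) (z : 'I_q -> Om) : R :=
  if k is k'.+1 then
    q%:R^-1 * \sum_(i < q) \sum_(t : restriction)
      cylinder_mass t (eta i) * iint_expand eta k' (upd z k' (glue t (eta i)))
  else f z.

Lemma iint_expandE (eta : 'I_q -> Om) k z :
  iint (mu eta) (fun z => (f z)%:E) k z = (iint_expand eta k z)%:E.
Proof.
elim: k z => [|k IH] z //=; under eq_integral do rewrite IH.
exact: kernel_integral.
Qed.

Lemma iint_expand_cvg (etas zs : nat -> 'I_q -> Om) (eta z : 'I_q -> Om) k :
  convq etas eta -> convq zs z ->
  iint_expand (etas m) k (zs m) @[m --> \oo] --> iint_expand eta k z.
Proof.
move=> etas_eta; elim: k zs z => [|k IH] zs z zs_z /=; first exact: f_cont.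
apply: cvgM; first exact: cvg_cst.
apply: cvg_big => [|i _]; first exact: add_continuous.
apply: cvg_big => [|t _]; first exact: add_continuous.
apply: cvgM; first by apply: cylinder_mass_cvg => x; exact: etas_eta.
apply: IH => j x; rewrite /upd; case: ifP => _; last exact: zs_z.
by rewrite /glue; case: insubP => [y _ _|_]; [exists 0%N | exact: etas_eta].
Qed.

End SpecificationKernel.

Theorem mainTheorem4 (R : realType) (V : countType) (S : finType) (s0 : S)
  (q : nat)
  (gamma : set V -> ('I_q -> Omega V s0) -> probability (Omega V s0) R)
  (Hspec : is_qspec gamma) (Hql : quasilocal gamma)
  (f : ('I_q -> Omega V s0) -> R) (Hf : contq f)
  (L : set V) (HL : finite_subset L) :
  contq (fun eta => fine (prod_int (gamma L eta) (fun sigma => (f sigma)%:E) eta)).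
Proof.
case: q gamma Hspec Hql f Hf => [|n] gamma Hspec Hql f Hf; first exact: Hf.
have [l ->] := (finite_seqP L).1 HL.
move=> w w0 w_w0; rewrite /prod_int.
under eq_cvg do rewrite (iint_expandE Hspec).
by rewrite (iint_expandE Hspec); exact: iint_expand_cvg.
Qed.
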